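(* For an integer $n\ge1$ and real $1\le x\le n$, define $\widetilde R_A(n,x)$ by $$A(n,x)=\vartheta(x)\,n+\widetilde R_A(n,x),$$ where $A(n,x)=\sum_{p\le x}\frac{2}{p-1}S_p(n)\log p$ (sum over primes). Then for $n^{2/3}\le x\le n$, $$\widetilde R_A(n,x)=O\!\left(x^{5/4}n^{3/4}(\log n)^{7/2}+n^{5/3}(\log n)^2\right).$$
   Context: $\vartheta(x)=\sum_{p\le x}\log p$ is the first Chebyshev function. For a base $b\ge2$, $d_b(m)$ is the sum of the base-$b$ digits of $m\ge0$ and $S_b(n)=\sum_{j=0}^{n-1}d_b(j)$. *)

From Stdlib Require Import Reals Lra Lia.
From mathcomp Require Import ssreflect ssrbool ssrnat prime.

Open Scope R_scope.

(* base-b digit sum of m (fuel m suffices since b >= 2 makes m / b < m) *)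
Fixpoint digsum_fuel (fuel b m : nat) : nat :=
  match fuel with
  | O => O
  | S f => match m with
           | O => O
           | _ => (Nat.modulo m b + digsum_fuel f b (Nat.div m b))%nat
           end
  end.

Definition digsum (b m : nat) : nat := digsum_fuel m b m.

Fixpoint Sdig (b n : nat) : nat :=
  match n with
  | O => O
  | S k => (Sdig b k + digsum b k)%nat
  end.

Fixpoint prime_sum_upto (N : nat) (x : R) (f : nat -> R) : R :=
  match N with
  | O => 0
  | S k => prime_sum_upto k x f +
           (if prime (S k) then (if Rle_dec (INR (S k)) x then f (S k) else 0) else 0)
  end.

(* bound Z.to_nat (up x) exceeds every integer <= x *)
Definition prime_sum (x : R) (f : nat -> R) : R :=
  prime_sum_upto (Z.to_nat (up x)) x f.

Definition theta (x : R) : R := prime_sum x (fun p => ln (INR p)).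

Definition A_sum (n : nat) (x : R) : R :=
  prime_sum x (fun p => 2 / (INR p - 1) * INR (Sdig p n) * ln (INR p)).

Definition RA (n : nat) (x : R) : R := A_sum n x - theta x * INR n.

From Stdlib Require Import Arith Reals Lra Lia Psatz.
From mathcomp Require ssrbool ssrnat prime.
Open Scope R_scope.

(* Write R~_A(n,x) = sum_{p <= x} e_p(n) log p with e_p(n) = 2 S_p(n)/(p-1) - n.
   Every j < n has at most d ~ log_p n digits, each at most p - 1, so
   |e_p(n)| log p = O(n log n) for all p <= n.  Averaging the last digit j mod p
   and bounding the higher digits by j / p gives -p <= e_p(n) <= 2 n^2/p^2.
   Splitting at y = n^(2/3): the primes p <= y contribute O(y n log n) = O(n^(5/3) log n);
   for y < p <= x we have n^2/p^2 <= y, so they contribute O(x (x + y) log n), and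
   x^2 <= x^(5/4) n^(3/4) for x <= n. *)

Section DigitSums.

Variable p : nat.
Hypothesis p_ge2 : (2 <= p)%nat.

Lemma digsum_fuel_indep f1 f2 m :
  (m <= f1)%nat -> (m <= f2)%nat -> digsum_fuel f1 p m = digsum_fuel f2 p m.
Proof.
  revert f2 m; induction f1 as [|f1 IH]; intros f2 m H1 H2.
  - replace m with 0%nat by lia. now destruct f2.
  - destruct m as [|m]; [now destruct f2|].
    destruct f2 as [|f2]; [lia|].
    assert (S m / p < S m)%nat by (apply Nat.div_lt; lia).
    cbn [digsum_fuel]. f_equal. apply IH; lia.
Qed.

Lemma digsum_rec j : digsum p j = (j mod p + digsum p (j / p))%nat.
Proof.
  destruct j as [|j].
  - now rewrite Nat.Div0.mod_0_l, Nat.Div0.div_0_l.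
  - assert (S j / p < S j)%nat by (apply Nat.div_lt; lia).
    unfold digsum at 1; cbn [digsum_fuel]. change ssrnat.addn with Nat.add.
    f_equal. apply digsum_fuel_indep; lia.
Qed.

Lemma digsum_le_self m : (digsum p m <= m)%nat.
Proof.
  induction m as [m IH] using lt_wf_ind.
  destruct m as [|m]; [reflexivity|].
  assert (Hlt : (S m / p < S m)%nat) by (apply Nat.div_lt; lia).
  specialize (IH _ Hlt). rewrite digsum_rec.
  pose proof (Nat.div_mod (S m) p ltac:(lia)). nia.
Qed.

Lemma mod_le_digsum j : (j mod p <= digsum p j)%nat.
Proof. rewrite digsum_rec. lia. Qed.

Lemma digsum_le_mod_add_div j : (digsum p j <= j mod p + j / p)%nat.
Proof. rewrite digsum_rec. pose proof (digsum_le_self (j / p)). lia. Qed.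

Lemma digsum_le_digits d j : (j < p ^ d)%nat -> (digsum p j <= (p - 1) * d)%nat.
Proof.
  revert j; induction d as [|d IH]; intros j Hj.
  - cbn in Hj. replace j with 0%nat by lia. cbn. lia.
  - rewrite digsum_rec.
    assert (j mod p < p)%nat by (apply Nat.mod_upper_bound; lia).
    assert (Hq : (j / p < p ^ d)%nat).
    { apply Nat.Div0.div_lt_upper_bound. now rewrite <- Nat.pow_succ_r'. }
    specialize (IH _ Hq). nia.
Qed.

Fixpoint mod_sum (n : nat) : nat :=
  match n with O => O | S k => (mod_sum k + k mod p)%nat end.

Fixpoint div_sum (n : nat) : nat :=
  match n with O => O | S k => (div_sum k + k / p)%nat end.

Lemma mod_sum_le_Sdig n : (mod_sum n <= Sdig p n)%nat.
Proof.
  induction n; cbn [mod_sum Sdig]; change ssrnat.addn with Nat.add; [lia|].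
  pose proof (mod_le_digsum n). lia.
Qed.

Lemma Sdig_le_mod_sum_add_div_sum n : (Sdig p n <= mod_sum n + div_sum n)%nat.
Proof.
  induction n; cbn [mod_sum div_sum Sdig]; change ssrnat.addn with Nat.add; [lia|].
  pose proof (digsum_le_mod_add_div n). lia.
Qed.

(* Each full block of p consecutive residues sums to p(p-1)/2; the second
   summand corrects for the incomplete last block. *)
Lemma mod_sum_closed_form n :
  (2 * mod_sum n + (n mod p) * (p - n mod p) = n * (p - 1))%nat.
Proof.
  induction n as [|n IH]; [now rewrite Nat.Div0.mod_0_l|].
  cbn [mod_sum].
  pose proof (Nat.div_mod n p ltac:(lia)) as Hdiv.
  pose proof (Nat.mod_upper_bound n p ltac:(lia)) as Hr.
  set (r := (n mod p)%nat) in *. set (q := (n / p)%nat) in *. clearbody r q.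
  destruct (Nat.eq_dec (S r) p) as [E|E].
  - assert (Hm : S n mod p = 0%nat).
    { symmetry. apply (Nat.mod_unique _ _ (S q)); lia. }
    rewrite Hm, <- E. nia.
  - assert (Hm : S n mod p = S r) by (symmetry; apply (Nat.mod_unique _ _ q); lia).
    rewrite Hm. nia.
Qed.

Lemma div_sum_le n : (2 * p * div_sum n + n <= n * n)%nat.
Proof.
  induction n; cbn [div_sum]; [lia|].
  pose proof (Nat.Div0.mul_div_le n p). nia.
Qed.

Lemma Sdig_lower n : (n * (p - 1) <= 2 * Sdig p n + p * (p - 1))%nat.
Proof.
  pose proof (mod_sum_closed_form n). pose proof (mod_sum_le_Sdig n).
  pose proof (Nat.mod_upper_bound n p ltac:(lia)). nia.
Qed.

Lemma Sdig_upper n : (2 * Sdig p n * p <= n * (p - 1) * p + n * n)%nat.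
Proof.
  pose proof (mod_sum_closed_form n). pose proof (Sdig_le_mod_sum_add_div_sum n).
  pose proof (div_sum_le n). nia.
Qed.

Lemma Sdig_le_digits n d : (n <= p ^ d)%nat -> (Sdig p n <= n * ((p - 1) * d))%nat.
Proof.
  induction n; intros Hn; cbn [Sdig]; change ssrnat.addn with Nat.add; [lia|].
  pose proof (digsum_le_digits d n ltac:(lia)). specialize (IHn ltac:(lia)). nia.
Qed.

Lemma exists_digit_count n : (1 <= n)%nat -> exists d, (n < p ^ d <= p * n)%nat.
Proof.
  induction n as [|n IH]; intros Hn; [lia|].
  destruct (Nat.eq_dec n 0) as [->|Hn0]; [exists 1%nat; cbn; lia|].
  destruct (IH ltac:(lia)) as [d Hd].
  destruct (Nat.eq_dec (S n) (p ^ d)) as [E|E].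
  - exists (S d). rewrite Nat.pow_succ_r', <- E. nia.
  - exists d. nia.
Qed.

End DigitSums.

Definition digit_error (p n : nat) : R := 2 / (INR p - 1) * INR (Sdig p n) - INR n.

Lemma RA_eq_prime_sum n x :
  RA n x = prime_sum x (fun p => digit_error p n * ln (INR p)).
Proof.
  unfold RA, A_sum, theta, prime_sum.
  induction (Z.to_nat (up x)) as [|N IH]; cbn [prime_sum_upto]; [ring|].
  rewrite <- IH. unfold digit_error.
  destruct (prime.prime (S N)), (Rle_dec (INR (S N)) x); cbn [ssrbool.is_left]; ring.
Qed.

Lemma ln_le x y : 0 < x -> x <= y -> ln x <= ln y.
Proof. intros Hx [Hxy|<-]; [now apply Rlt_le, ln_increasing | apply Rle_refl]. Qed.

Lemma INR_ge2 p : (2 <= p)%nat -> 2 <= INR p.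
Proof. intros Hp. apply (le_INR 2) in Hp. now simpl in Hp. Qed.

Section DigitError.

Variables p n : nat.
Hypothesis p_ge2 : (2 <= p)%nat.

Lemma digit_error_add_mul : (digit_error p n + INR n) * (INR p - 1) = 2 * INR (Sdig p n).
Proof.
  pose proof (INR_ge2 p p_ge2) as HP. unfold digit_error. field; lra.
Qed.

Lemma INR_sub1 : INR (p - 1) = INR p - 1.
Proof. rewrite minus_INR by lia. reflexivity. Qed.

Lemma digit_error_ge : - INR p <= digit_error p n.
Proof.
  pose proof (INR_ge2 p p_ge2) as HP. pose proof digit_error_add_mul.
  pose proof (le_INR _ _ (Sdig_lower p p_ge2 n)) as Hlo.
  rewrite !plus_INR, !mult_INR, INR_sub1 in Hlo. simpl in Hlo.
  nra.
Qed.

Lemma digit_error_le : digit_error p n <= 2 * INR n ^ 2 / INR p ^ 2.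
Proof.
  pose proof (INR_ge2 p p_ge2) as HP. pose proof digit_error_add_mul.
  pose proof (le_INR _ _ (Sdig_upper p p_ge2 n)) as Hup.
  rewrite !plus_INR, !mult_INR, INR_sub1 in Hup. simpl in Hup.
  assert (digit_error p n * INR p ^ 2 <= 2 * INR n ^ 2).
  { destruct (Rle_or_lt (digit_error p n) 0); nra. }
  apply Rmult_le_reg_r with (INR p ^ 2); [nra|].
  field_simplify; nra.
Qed.

Lemma Rabs_digit_error_le : Rabs (digit_error p n) <= INR p + 2 * INR n ^ 2 / INR p ^ 2.
Proof.
  pose proof (INR_ge2 p p_ge2) as HP. pose proof digit_error_ge. pose proof digit_error_le.
  assert (0 <= 2 * INR n ^ 2 / INR p ^ 2) by (apply Rle_mult_inv_pos; nra).
  apply Rabs_le. lra.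
Qed.

(* With n < p^d <= p n, all j < n have at most d digits, and d log p <= log n + log p. *)
Lemma Rabs_digit_error_mul_ln_le :
  (p <= n)%nat -> Rabs (digit_error p n) * ln (INR p) <= 5 * INR n * ln (INR n).
Proof.
  intros Hpn.
  pose proof (INR_ge2 p p_ge2) as HP.
  assert (HPN : INR p <= INR n) by now apply le_INR.
  destruct (exists_digit_count p p_ge2 n ltac:(lia)) as [d [Hlt Hle]].
  pose proof (le_INR _ _ (Sdig_le_digits p p_ge2 n d ltac:(lia))) as Hs.
  rewrite !mult_INR, INR_sub1 in Hs.
  apply le_INR in Hle. rewrite mult_INR, pow_INR in Hle.
  assert (HlnP : 0 < ln (INR p)) by (rewrite <- ln_1; apply ln_increasing; lra).
  assert (HlnPN : ln (INR p) <= ln (INR n)) by (apply ln_le; lra).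
  assert (Hdigits : INR d * ln (INR p) <= ln (INR p) + ln (INR n)).
  { rewrite <- ln_pow, <- ln_mult by lra. apply ln_le; [apply pow_lt|]; lra. }
  pose proof digit_error_add_mul. pose proof digit_error_ge.
  pose proof (pos_INR (Sdig p n)). pose proof (pos_INR d).
  assert (Hu : digit_error p n + INR n <= 2 * INR n * INR d) by nra.
  assert (Rabs (digit_error p n) <= digit_error p n + 2 * INR n) by (apply Rabs_le; nra).
  nra.
Qed.

End DigitError.

(* [Rmin (INR N) z] bounds the number of integers 1 <= k <= N with k <= z. *)
Lemma Rabs_prime_sum_upto_le N x y a b h :
  0 <= x -> 0 <= y -> 0 <= a -> 0 <= b ->
  (forall k, prime.prime k = true -> INR k <= x ->
     Rabs (h k) <= a + (if Rle_dec (INR k) y then b else 0)) ->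
  Rabs (prime_sum_upto N x h) <= Rmin (INR N) x * a + Rmin (INR N) y * b.
Proof.
  intros Hx Hy Ha Hb Hh. induction N as [|N IH]; cbn [prime_sum_upto].
  - rewrite Rabs_R0, !Rmin_left by (simpl; lra). simpl. lra.
  - eapply Rle_trans; [apply Rabs_triang|]. rewrite S_INR.
    assert (Hmono : forall z, Rmin (INR N) z <= Rmin (INR N + 1) z)
      by (intros z; apply Rle_min_compat_r; lra).
    assert (Hstep : forall z, INR N + 1 <= z -> Rmin (INR N + 1) z = Rmin (INR N) z + 1)
      by (intros z Hz; rewrite !Rmin_left by lra; reflexivity).
    pose proof (Hmono x). pose proof (Hmono y).
    destruct (prime.prime (S N)) eqn:Hp;
      [destruct (Rle_dec (INR N + 1) x) as [Hkx|Hkx]|]; cbn [ssrbool.is_left];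
      [|rewrite Rabs_R0; nra..].
    specialize (Hh _ Hp ltac:(rewrite S_INR; exact Hkx)). rewrite S_INR in Hh.
    rewrite (Hstep x Hkx).
    destruct (Rle_dec (INR N + 1) y) as [Hky|Hky]; cbv beta iota in Hh.
    + rewrite (Hstep y Hky). nra.
    + nra.
Qed.

Lemma Rabs_prime_sum_le x y a b h :
  0 <= x -> 0 <= y -> 0 <= a -> 0 <= b ->
  (forall k, prime.prime k = true -> INR k <= x ->
     Rabs (h k) <= a + (if Rle_dec (INR k) y then b else 0)) ->
  Rabs (prime_sum x h) <= x * a + y * b.
Proof.
  intros Hx Hy Ha Hb Hh. unfold prime_sum.
  eapply Rle_trans; [now apply (Rabs_prime_sum_upto_le _ x y a b)|].
  pose proof (Rmin_r (INR (Z.to_nat (up x))) x). pose proof (Rmin_r (INR (Z.to_nat (up x))) y).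
  nra.
Qed.

Lemma Rpower_two_thirds_cube z : 0 < z -> Rpower z (2 / 3) ^ 3 = z ^ 2.
Proof.
  intros Hz. rewrite <- Rpower_pow, Rpower_mult by apply exp_pos.
  rewrite <- Rpower_pow by exact Hz. f_equal. simpl. field.
Qed.

(* Split at y = n^(2/3): beyond y the quadratic term n^2/p^2 is at most y, since y^3 = n^2. *)
Lemma Rabs_digit_error_mul_ln_split n p :
  (2 <= p)%nat -> (p <= n)%nat ->
  let y := Rpower (INR n) (2 / 3) in
  Rabs (digit_error p n * ln (INR p)) <=
    ln (INR n) * (INR p + 2 * y) +
    (if Rle_dec (INR p) y then 5 * INR n * ln (INR n) else 0).
Proof.
  intros Hp Hpn y.
  pose proof (INR_ge2 p Hp) as HP.
  assert (HPN : INR p <= INR n) by now apply le_INR.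
  assert (HlnP : 0 < ln (INR p)) by (rewrite <- ln_1; apply ln_increasing; lra).
  assert (HlnPN : ln (INR p) <= ln (INR n)) by (apply ln_le; lra).
  assert (Hy : 0 < y) by apply exp_pos.
  rewrite Rabs_mult, (Rabs_pos_eq (ln (INR p))) by lra.
  destruct (Rle_dec (INR p) y) as [Hpy|Hpy].
  - pose proof (Rabs_digit_error_mul_ln_le p n Hp Hpn). nra.
  - assert (Hsq : 2 * INR n ^ 2 / INR p ^ 2 <= 2 * y).
    { rewrite <- (Rpower_two_thirds_cube (INR n)) by lra. fold y.
      apply Rnot_le_lt in Hpy.
      apply Rmult_le_reg_r with (INR p ^ 2); [nra|].
      unfold Rdiv. rewrite Rmult_assoc, Rinv_l by nra.
      assert (y * y <= INR p * INR p) by nra. simpl. nra. }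
    pose proof (Rabs_digit_error_le p n Hp) as Habs.
    apply Rle_trans with ((INR p + 2 * y) * ln (INR p)); [|nra].
    apply Rmult_le_compat_r; lra.
Qed.

Lemma Rabs_RA_le n x :
  (1 <= n)%nat -> 0 <= x -> x <= INR n ->
  let y := Rpower (INR n) (2 / 3) in
  Rabs (RA n x) <= x * (ln (INR n) * (x + 2 * y)) + y * (5 * INR n * ln (INR n)).
Proof.
  intros Hn Hx HxN y.
  assert (HN : 1 <= INR n) by now apply (le_INR 1).
  assert (HL : 0 <= ln (INR n)) by (rewrite <- ln_1; apply ln_le; lra).
  assert (Hy : 0 < y) by apply exp_pos.
  rewrite RA_eq_prime_sum. apply Rabs_prime_sum_le; try nra.
  intros k Hk Hkx.
  assert (Hk2 : (2 <= k)%nat) by exact (ssrbool.elimT ssrnat.leP (prime.prime_gt1 Hk)).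
  assert (Hkn : (k <= n)%nat) by (apply INR_le; lra).
  eapply Rle_trans; [now apply Rabs_digit_error_mul_ln_split|]. fold y.
  apply Rplus_le_compat_r, Rmult_le_compat_l; lra.
Qed.

Lemma pow2_le_Rpower_mul x z a b :
  0 < x <= z -> 0 <= b -> a + b = 2 -> x ^ 2 <= Rpower x a * Rpower z b.
Proof.
  intros Hxz Hb Hab.
  rewrite <- Rpower_pow by lra. replace (INR 2) with (a + b) by (simpl; lra).
  rewrite Rpower_plus.
  apply Rmult_le_compat_l; [apply Rlt_le, exp_pos|]. now apply Rle_Rpower_l.
Qed.

Lemma le_powers_of_half_lt L : / 2 < L -> L <= 8 * (L ^ 3 * sqrt L) /\ L <= 2 * L ^ 2.
Proof.
  intros HL.
  assert (Hs : / 2 <= sqrt L).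
  { rewrite <- (sqrt_pow2 (/ 2)) by lra. apply sqrt_le_1_alt. simpl. lra. }
  assert (/ 8 <= L ^ 2 * sqrt L).
  { simpl. apply Rle_trans with (/ 2 * / 2 * / 2); [lra|]. apply Rmult_le_compat; nra. }
  split; [|nra].
  replace (8 * (L ^ 3 * sqrt L)) with (L * (8 * (L ^ 2 * sqrt L))) by ring.
  nra.
Qed.

Lemma RA_bound_le_target n x :
  (1 <= n)%nat -> 0 < x -> x <= INR n ->
  let y := Rpower (INR n) (2 / 3) in
  x * (ln (INR n) * (x + 2 * y)) + y * (5 * INR n * ln (INR n)) <=
    16 * (Rpower x (5 / 4) * Rpower (INR n) (3 / 4) * (ln (INR n) ^ 3 * sqrt (ln (INR n)))
          + Rpower (INR n) (5 / 3) * ln (INR n) ^ 2).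
Proof.
  intros Hn Hx HxN y.
  assert (HN : 1 <= INR n) by now apply (le_INR 1).
  assert (Hy : 0 < y) by apply exp_pos.
  assert (Hny : INR n * y = Rpower (INR n) (5 / 3)).
  { rewrite <- (Rpower_1 (INR n)) at 1 by lra. unfold y. rewrite <- Rpower_plus.
    f_equal. field. }
  pose proof (pow2_le_Rpower_mul x (INR n) (5 / 4) (3 / 4) ltac:(lra) ltac:(lra) ltac:(lra)).
  rewrite <- Hny.
  set (A := Rpower x (5 / 4) * Rpower (INR n) (3 / 4)) in *.
  assert (Hsq : 0 <= sqrt (ln (INR n))) by apply sqrt_pos.
  destruct (Nat.eq_dec n 1) as [->|Hn1].
  - change (INR 1) with 1 in *. rewrite ln_1. nra.
  - assert (HL : / 2 < ln (INR n)).
    { apply Rlt_le_trans with (ln 2); [apply ln_lt_2|].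
      apply ln_le; [lra|]. apply (le_INR 2). lia. }
    destruct (le_powers_of_half_lt _ HL) as [HL8 HL2].
    set (L := ln (INR n)) in *.
    assert (Hx2 : L * x ^ 2 <= 8 * (A * (L ^ 3 * sqrt L))).
    { apply Rle_trans with (L * A); [apply Rmult_le_compat_l; lra|]. nra. }
    assert (Hxy : L * (x * y) <= L * (INR n * y)) by (apply Rmult_le_compat_l; nra).
    assert (HyL : INR n * y * L <= INR n * y * (2 * L ^ 2)) by (apply Rmult_le_compat_l; nra).
    nra.
Qed.

Theorem theoremA2 :
  exists C : R, 0 < C /\
    forall (n : nat) (x : R),
      (1 <= n)%nat ->
      Rpower (INR n) (2 / 3) <= x -> x <= INR n ->
      Rabs (RA n x) <=
        C * (Rpower x (5 / 4) * Rpower (INR n) (3 / 4)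
               * (ln (INR n) ^ 3 * sqrt (ln (INR n)))
             + Rpower (INR n) (5 / 3) * (ln (INR n)) ^ 2).
Proof.
  exists 16. split; [lra|]. intros n x Hn Hyx HxN.
  assert (Hx : 0 < x) by (eapply Rlt_le_trans; [apply exp_pos | exact Hyx]).
  eapply Rle_trans; [apply Rabs_RA_le; [exact Hn | lra | exact HxN]|].
  now apply RA_bound_le_target.
Qed.
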